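(* Let $S\le T_n$ be a transformation monoid and $G$ the normalizer of $S$ in $S_n$. If every element of $SG$ has a square root in $SG$, then every element of $S$ has a square root in $S$.
   Context: A transformation monoid is a subsemigroup of $T_n$ containing the identity map; $G=\{g\in S_n:g^{-1}Sg=S\}$ and $SG=\{sg:s\in S,g\in G\}$, a semigroup. A square root of $x$ in a semigroup $U$ is an element $y\in U$ with $y^2=x$. *)

From mathcomp Require Import all_boot all_fingroup.
Set Implicit Arguments. Unset Strict Implicit. Unset Printing Implicit Defensive.

Definition tmap (n : nat) := {ffun 'I_n -> 'I_n}.

(* Product in T_n, maps acting on the right: x (f g) = (x f) g. *)
Definition tmul n (f g : tmap n) : tmap n := [ffun x => g (f x)].

Definition tid n : tmap n := [ffun x => x].

Definition is_tmonoid n (S : {set tmap n}) : Prop :=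
  tid n \in S /\ (forall f g, f \in S -> g \in S -> tmul f g \in S).

Definition pmap n (g : {perm 'I_n}) : tmap n := [ffun x => g x].

Definition normalizerT n (S : {set tmap n}) : {set {perm 'I_n}} :=
  [set g | [set tmul (tmul (pmap g^-1) s) (pmap g) | s in S] == S].

Definition SGset n (S : {set tmap n}) : {set tmap n} :=
  [set tmul s (pmap g) | s in S, g in normalizerT S].

Definition has_sqrt n (U : {set tmap n}) (x : tmap n) : Prop :=
  exists2 y, y \in U & tmul y y = x.

(* The square root hypothesis lets us walk backwards along the squaring map
   forever without leaving the finite set SG; by pigeonhole the walk from
   s \in S (note S <= SG, as 1 \in G) revisits a point, so s lies on a cycle of
   squaring: s = s^(2^m) for some m > 0.  Then s is the square of s^(2^(m-1)),
   which lies in S because S is closed under products. *)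
From Pilot Require Import Defs.
From mathcomp Require Import all_boot all_fingroup.

Set Implicit Arguments. Unset Strict Implicit. Unset Printing Implicit Defensive.

Section Periodic.
Variables (T : finType) (f : T -> T).

Lemma periodic_iter (z : T) m i :
  iter m f z = z -> iter m f (iter i f z) = iter i f z.
Proof. by move=> fz; rewrite -iterD addnC iterD fz. Qed.

Lemma periodic_of_preimages (A : {pred T}) :
  (forall x, x \in A -> exists2 y, y \in A & f y = x) ->
  forall x, x \in A -> exists2 m, 0 < m & iter m f x = x.
Proof.
move=> preA x xA.
pose r y := odflt y [pick z in A | f z == y].
have rA y : y \in A -> r y \in A /\ f (r y) = y.
  move=> yA; rewrite /r; case: pickP => [z /andP[zA /eqP //]|none] /=.
  by have [z zA fz] := preA y yA; move: (none z); rewrite zA fz eqxx.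
have iter_rA k : iter k r x \in A by elim: k => //= k IH; case: (rA _ IH).
have iter_fr k j : iter k f (iter (k + j) r x) = iter j r x.
  by elim: k => // k IH; rewrite iterSr addSn /= (rA _ (iter_rA _)).2 IH.
pose walk (k : 'I_#|T|.+1) := iter k r x.
have /injectivePn[i [j neq_ij eq_ij]] : ~~ injectiveb walk.
  apply/injectiveP => /leq_card; by rewrite card_ord ltnn.
wlog lt_ij : i j neq_ij eq_ij / i < j.
  move=> gen; case: (ltngtP i j) => [|lt_ji|/val_inj eq]; first exact: gen.
  - by apply: (gen j i); rewrite // eq_sym.
  - by rewrite eq eqxx in neq_ij.
have z_periodic : iter (j - i) f (iter i r x) = iter i r x.
  by rewrite /walk in eq_ij; rewrite {1}eq_ij -[X in iter X r](subnK (ltnW lt_ij)) iter_fr.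
exists (j - i); first by rewrite subn_gt0.
have <- : iter i f (iter i r x) = x by rewrite -[X in iter X r]addn0 iter_fr.
exact: periodic_iter.
Qed.

End Periodic.

Section TransformationMonoid.
Variables (n : nat) (S : {set tmap n}).

Definition tsq (f : tmap n) : tmap n := tmul f f.

Lemma tmul1f (f : tmap n) : tmul (tid n) f = f.
Proof. by apply/ffunP=> x; rewrite !ffunE. Qed.

Lemma tmulf1 (f : tmap n) : tmul f (tid n) = f.
Proof. by apply/ffunP=> x; rewrite !ffunE. Qed.

Lemma pmap1 : Defs.pmap (1%g : {perm 'I_n}) = tid n.
Proof. by apply/ffunP=> x; rewrite !ffunE perm1. Qed.

Lemma normalizerT1 : (1%g : {perm 'I_n}) \in normalizerT S.
Proof.
rewrite inE invg1 pmap1; apply/eqP.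
rewrite -[RHS]imset_id; apply: eq_imset => s.
by rewrite tmul1f tmulf1.
Qed.

Lemma mem_SGset s : s \in S -> s \in SGset S.
Proof.
move=> sS; rewrite -[s]tmulf1 -pmap1.
exact: imset2_f sS normalizerT1.
Qed.

Hypothesis mulS : forall f g, f \in S -> g \in S -> tmul f g \in S.

Lemma iter_tsq_in s k : s \in S -> iter k tsq s \in S.
Proof. by move=> sS; elim: k => //= k IH; apply: mulS. Qed.

Lemma has_sqrt_of_tsq_cycle s m :
  s \in S -> 0 < m -> iter m tsq s = s -> has_sqrt S s.
Proof.
move=> sS m_gt0 cyc; exists (iter m.-1 tsq s); first exact: iter_tsq_in.
by rewrite -{3}cyc -(prednK m_gt0) iterS.
Qed.

End TransformationMonoid.

Theorem corollary4p9 (n : nat) (S : {set tmap n}) :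
  is_tmonoid S ->
  (forall x, x \in SGset S -> has_sqrt (SGset S) x) ->
  forall x, x \in S -> has_sqrt S x.
Proof.
move=> [_ mulS] sqrtSG s sS.
have [m m_gt0 cyc] := periodic_of_preimages (f := @tsq n) sqrtSG (mem_SGset sS).
exact: (has_sqrt_of_tsq_cycle mulS sS m_gt0 cyc).
Qed.
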